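(* Let $S=\{p_1,\dots,p_n\}$ be a set of point sites in $\mathbb{R}^d$ with an admissible system of distance functions $\{d_{p_i}\}$, let $C\subset\mathbb{R}^d$ be a bounded open set, and let $\lambda_1,\dots,\lambda_n>0$ with $\sum_i\lambda_i=\mu(C)$. Let $w=(w_1,\dots,w_n)$ be a weight vector with $\mu(C\cap\mathrm{VR}_w(p_i,S))=\lambda_i$ for $i=1,\dots,n$, and let $f_w:C\to S$ be a map with $f_w(z)=p_i$ for $z\in C_i:=C\cap\mathrm{VR}_w(p_i,S)$ (on the remaining points $C\cap V_w(S)$, $f_w$ assigns some site $p_i$ minimizing $d_{p_i}(z)-w_i$). Then $f_w\in F_\Lambda$ and $f_w$ minimizes $$\mathrm{cost}(f)=\int_C d_{f(z)}(z)\,\mathrm{d}\mu(z)$$ over all $f\in F_\Lambda$. Moreover, any $f\in F_\Lambda$ with $\mathrm{cost}(f)=\mathrm{cost}(f_w)$ coincides with $f_w$ outside a set of $\mu$-measure zero.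
   Context: $\mu$ is a measure defined on all Lebesgue-measurable subsets of $\mathbb{R}^d$ such that $\mu$ and $d$-dimensional Lebesgue measure are mutually absolutely continuous. Each site $p\in S$ has a continuous function $d_p:\mathbb{R}^d\to\mathbb{R}_{\ge 0}$. For $p\neq q\in S$ and $\gamma\in\mathbb{R}$ let $R_\gamma(p,q)=\{z\in\mathbb{R}^d : d_p(z)-d_q(z)<\gamma\}$. The system $\{d_p\}_{p\in S}$ is called admissible if for all $p\neq q\in S$ and every bounded open set $C\subset\mathbb{R}^d$ there exist real numbers $m_{pq}<M_{pq}$ such that the function $\gamma\mapsto\mu(C\cap R_\gamma(p,q))$ is continuous on $\mathbb{R}$ and increases (monotonically) from $0$ to $\mu(C)$ as $\gamma$ grows from $m_{pq}$ to $M_{pq}$; moreover $C\cap R_\gamma(p,q)=\emptyset$ for $\gamma\le m_{pq}$ and $C\subset R_\gamma(p,q)$ for $\gamma\ge M_{pq}$. For a weight vector $w$, $\mathrm{VR}_w(p_i,S)=\bigcap_{j\neq i}R_{w_i-w_j}(p_i,p_j)$ (points $z$ with $d_{p_i}(z)-w_i<d_{p_j}(z)-w_j$ for all $j\neq i$), and $V_w(S)=\mathbb{R}^d\setminus\bigcup_i\mathrm{VR}_w(p_i,S)$. $F_\Lambda$ denotes the set of $\mu$-measurable maps $f:C\to S$ (each $f^{-1}(p_i)$ measurable) with $\mu(f^{-1}(p_i))=\lambda_i$ for $i=1,\dots,n$. *)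

From HB Require Import structures.
From mathcomp Require Import all_boot all_order all_algebra.
From mathcomp Require Import all_classical all_reals all_analysis.
Set Implicit Arguments. Unset Strict Implicit. Unset Printing Implicit Defensive.
Import Order.TTheory GRing.Theory Num.Theory.
Import numFieldNormedType.Exports.
Local Open Scope classical_set_scope.
Local Open Scope ring_scope.

Section Defs.
Variables (R : realType) (d : nat).

Definition Rd := 'rV[R]_d.

Definition box (a b : Rd) : set Rd :=
  [set x | forall i : 'I_d, a ord0 i < x ord0 i < b ord0 i].
Definition box_vol (a b : Rd) : R :=
  \prod_(i < d) Num.max 0 (b ord0 i - a ord0 i).

(* d-dimensional Lebesgue null sets: Lebesgue outer measure zero, i.e.
   coverable by countably many boxes of arbitrarily small total volume *)
Definition leb_null (A : set Rd) : Prop :=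
  forall e : R, 0 < e -> exists a b : nat -> Rd,
    A `<=` \bigcup_k box (a k) (b k) /\
    forall N, \sum_(k < N) box_vol (a k) (b k) <= e.

Definition borel_Rd : set (set Rd) := <<s [set A : set Rd | open A] >>.

(* Lebesgue-measurable sets = completion of the Borel sets w.r.t. null sets *)
Definition leb_measurable : set (set Rd) :=
  [set A | exists B N, borel_Rd B /\ leb_null N /\
     (A `\` B) `|` (B `\` A) `<=` N].

(* R^d equipped with the sigma-algebra of Lebesgue-measurable sets
   (leb_measurable is itself a sigma-algebra, so the generated one equals it) *)
Definition LebRd := g_sigma_algebraType leb_measurable.

Definition Rgam (dp dq : Rd -> R) (g : R) : set Rd :=
  [set z | dp z - dq z < g].

Definition bounded_Rd (C : set Rd) : Prop :=
  exists M : R, forall x, C x -> `|x| <= M.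

End Defs.

From HB Require Import structures.
From mathcomp Require Import all_boot all_order all_algebra.
From mathcomp Require Import all_classical all_reals all_analysis.
From mathcomp Require Import lra measurable_realfun.
Set Implicit Arguments. Unset Strict Implicit. Unset Printing Implicit Defensive.
Import Order.TTheory GRing.Theory Num.Theory.
Import numFieldNormedType.Exports.
Local Open Scope classical_set_scope.
Local Open Scope ring_scope.

(* Shifting the integrand by the weights: for every f in F_Lambda the integral
   of w_{f(z)} over C is sum_i lambda_i w_i, whatever f is.  Hence cost f and
   cost f_w differ by the integral of
     (d_{f(z)}(z) - w_{f(z)}) - (d_{f_w(z)}(z) - w_{f_w(z)}),
   which is nonnegative since f_w(z) minimises d_p(z) - w_p pointwise.  If the
   costs agree this difference vanishes almost everywhere.  The cells C_i
   already exhaust mu(C), so the boundary C /\ V_w(S) is null, and off it the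
   minimiser is strict, forcing f = f_w. *)

Lemma norm_le_sum_norm (R : numDomainType) (n : nat) (x : 'I_n -> R) (i : 'I_n) :
  `|x i| <= \sum_(k < n) `|x k|.
Proof. by rewrite (bigD1 i) //= lerDl sumr_ge0. Qed.

Lemma bigsetU_ordP (T : Type) (n : nat) (F : 'I_n -> set T) (z : T) :
  (\big[setU/set0]_(i < n) F i) z <-> exists i, F i z.
Proof.
split; last by move=> [i Fiz]; rewrite (bigD1 i) //=; left.
by elim/big_rec: _ => [//|i A _ IH [Fiz|/IH//]]; exists i.
Qed.

Section IntegralFacts.
Context (d0 : measure_display) (T : measurableType d0) (R : realType).
Variables (mu : {measure set T -> \bar R}) (D : set T).
Hypothesis mD : measurable D.

Lemma integral_sum_indic_scale (n : nat) (A : 'I_n -> set T) (c : 'I_n -> R) :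
  (forall k, measurable (A k)) -> (forall k, A k `<=` D) -> (forall k, 0 <= c k) ->
  (\int[mu]_(z in D) (\sum_(k < n) \1_(A k) z * c k)%:E =
   \sum_(k < n) mu (A k) * (c k)%:E)%E.
Proof.
move=> mA AD c0; under eq_integral => z _ do rewrite -sumEFin.
rewrite ge0_integral_sum //; last by move=> k z _; rewrite lee_fin mulr_ge0.
  apply: eq_bigr => k _; under eq_integral => z _ do rewrite EFinM muleC.
  rewrite ge0_integralZl_EFin //; last first.
    exact/measurable_EFinP/measurable_indic.
  by rewrite integral_indic // (setIidl (AD k)) muleC.
move=> k; apply/measurable_EFinP.
apply: measurable_funM; last exact: measurable_cst.
exact: measurable_indic.
Qed.

Lemma le_integral_eq_ae (g h : T -> R) :
  measurable_fun D g -> measurable_fun D h ->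
  (forall z, D z -> 0 <= g z) -> (forall z, D z -> g z <= h z) ->
  (\int[mu]_(z in D) (g z)%:E)%E \is a fin_num ->
  (\int[mu]_(z in D) (g z)%:E = \int[mu]_(z in D) (h z)%:E)%E ->
  exists N, [/\ measurable N, mu N = 0%E & forall z, D z -> g z < h z -> N z].
Proof.
move=> mg mh g0 gh gfin eqgh.
have mhg : measurable_fun D (h \- g) by exact: measurable_funB.
have hg0 z : D z -> 0 <= (h \- g) z by move=> Dz; rewrite subr_ge0 gh.
have int_hg0 : (\int[mu]_(z in D) ((h \- g) z)%:E = 0)%E.
  have : (\int[mu]_(z in D) (h z)%:E =
          \int[mu]_(z in D) (g z)%:E + \int[mu]_(z in D) ((h \- g) z)%:E)%E.
    rewrite -ge0_integralD //; last 2 first.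
    - exact/measurable_EFinP.
    - exact/measurable_EFinP.
    by apply: eq_integral => z _; rewrite -EFinD subrKC.
  rewrite -eqgh => /(congr1 (fun t => t - \int[mu]_(z in D) (g z)%:E)%E).
  by rewrite subee // addeAC subee // add0e.
have /(ae_eq_integral_abs mu mD) : (\int[mu]_(z in D) `|((h \- g) z)%:E| = 0)%E.
  by rewrite -int_hg0; apply: eq_integral => z /[!inE] Dz; rewrite gee0_abs ?lee_fin ?hg0.
move=> /(_ (proj2 (measurable_EFinP _ _) mhg)) [N [mN N0 subN]].
exists N; split => // z Dz ltgh; apply: subN => /(_ Dz) [] /eqP.
by rewrite subr_eq0 gt_eqF.
Qed.

End IntegralFacts.

Lemma open_lt_continuous (T : topologicalType) (R : realType) (a b : T -> R) :
  continuous a -> continuous b -> open [set z | a z < b z].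
Proof.
move=> ca cb; have -> : [set z | a z < b z] = (b \- a) @^-1` [set y | 0 < y].
  by apply/seteqP; split => z /=; rewrite subr_gt0.
by apply: open_comp; [move=> z _; exact: continuousB (cb z) (ca z)|exact: open_gt].
Qed.

Lemma continuous_bounded_Rd (R : realType) (d : nat) (g : Rd R d -> R) (C : set (Rd R d)) :
  continuous g -> bounded_Rd C -> exists K, forall z, C z -> g z <= K.
Proof.
move=> cg [M CM]; set r := `|M| + 1.
have r0 : 0 < r by rewrite ltr_pwDr.
have CB : C `<=` closed_ball (0 : Rd R d) r.
  move=> z Cz; rewrite closed_ballE //= /closed_ball_ /= sub0r normrN.
  by rewrite (le_trans (CM z Cz)) // (le_trans (ler_norm M)) // lerDl.
have cB : compact (closed_ball (0 : Rd R d) r).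
  apply: bounded_closed_compact; last exact: closed_ball_closed.
  exists r; split; first by rewrite realE ltW.
  move=> x xr y; rewrite closed_ballE //= /closed_ball_ /= sub0r normrN => yr.
  exact: le_trans yr (ltW xr).
have [K [_ gK]] := compact_bounded (continuous_compact (continuous_subspaceT cg) cB).
exists (K + 1) => z Cz; apply: le_trans (ler_norm _) _.
have K1 : K < K + 1 by rewrite ltrDl.
exact: (gK _ K1 (g z) (ex_intro2 _ _ z (CB z Cz) erefl)).
Qed.

Lemma leb_null_measurable (R : realType) (d : nat) (A : set (Rd R d)) :
  leb_null A -> measurable (A : set (LebRd R d)).
Proof.
move=> nA; apply: sub_sigma_algebra; exists set0, A.
split; first exact: sigma_algebra0.
by split => //; rewrite setD0 set0D setU0.
Qed.

Lemma leb_null_subset (R : realType) (d : nat) (A B : set (Rd R d)) :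
  A `<=` B -> leb_null B -> leb_null A.
Proof.
move=> AB nB e e0; have [a [b [Bab sab]]] := nB e e0.
by exists a, b; split => //; exact: subset_trans Bab.
Qed.

Section AbsolutelyContinuous.
Variables (R : realType) (d : nat) (mu : {measure set (LebRd R d) -> \bar R}).
Hypothesis mu_null :
  forall A : set (LebRd R d), measurable A -> (mu A = 0%E <-> leb_null A).

(* Not provable outright: for d = 0 every box has volume 1, so [set0] is not
   [leb_null] and [mu_null] is unsatisfiable. *)
Lemma leb_null0 : @leb_null R d set0.
Proof. by apply/(mu_null measurable0); exact: measure0. Qed.

Lemma open_measurable_Rd (A : set (Rd R d)) : open A -> measurable (A : set (LebRd R d)).
Proof.
move=> oA; apply: sub_sigma_algebra; exists A, set0.
split; first exact: sub_sigma_algebra.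
by split; [exact: leb_null0|rewrite setDv set0U].
Qed.

Lemma continuous_measurable_Rd (g : Rd R d -> R) (D : set (LebRd R d)) :
  continuous g -> measurable_fun D (g : LebRd R d -> R).
Proof.
move=> cg mD; apply: (measurability _ (RGenOInfty.measurableE R)) => //.
move=> _ [_ [x ->] <-]; apply: measurableI => //; apply: open_measurable_Rd.
by apply: open_comp => // z _; apply: cg.
Qed.

Lemma mu_null_subset (N B : set (LebRd R d)) :
  measurable N -> mu N = 0%E -> B `<=` N -> measurable B /\ mu B = 0%E.
Proof.
move=> mN N0 BN; have nB : leb_null B.
  exact: leb_null_subset BN (proj1 (mu_null mN) N0).
have mB := leb_null_measurable nB.
by split => //; apply/(mu_null mB).
Qed.

End AbsolutelyContinuous.

Section WeightedVoronoi.
Variables (R : realType) (d n : nat) (mu : {measure set (LebRd R d) -> \bar R}).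
Variables (p : 'I_n -> Rd R d) (dist : Rd R d -> Rd R d -> R).
Variables (C : set (Rd R d)) (lam w : 'I_n -> R).
Hypothesis mu_null :
  forall A : set (LebRd R d), measurable A -> (mu A = 0%E <-> leb_null A).
Hypothesis p_inj : injective p.
Hypothesis dist_cont : forall i, continuous (dist (p i)).
Hypothesis dist_ge0 : forall i z, 0 <= dist (p i) z.
Hypothesis C_open : open C.
Hypothesis C_bounded : bounded_Rd C.
Hypothesis mu_C : mu C = (\sum_(i < n) lam i)%:E.

Local Notation T := (LebRd R d).

Definition vcell (i : 'I_n) : set T :=
  C `&` [set z | forall j, j != i -> dist (p i) z - w i < dist (p j) z - w j].

Hypothesis mu_vcell : forall i, mu (vcell i) = (lam i)%:E.

Definition vboundary : set T := C `\` \big[setU/set0]_(i < n) vcell i.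

Definition fiber (f : Rd R d -> Rd R d) (i : 'I_n) : set T := C `&` f @^-1` [set p i].

Definition feasible (f : Rd R d -> Rd R d) : Prop :=
  (forall z, C z -> exists i, f z = p i) /\
  forall i, measurable (fiber f i) /\ mu (fiber f i) = (lam i)%:E.

Definition cost (f : Rd R d -> Rd R d) : \bar R :=
  (\int[mu]_(z in (C : set T)) (dist (f z) z)%:E)%E.

Lemma measurable_C : measurable (C : set T).
Proof. exact: (open_measurable_Rd mu_null C_open). Qed.

Lemma measurable_vcell i : measurable (vcell i).
Proof.
apply: measurableI; first exact: measurable_C.
apply: (fin_bigcap_measurable (D := [set j | j != i])); first exact: finite_finset.
move=> j _; apply: (open_measurable_Rd mu_null).
apply: (@open_lt_continuous (Rd R d)) => z.
- by apply: continuousB; [exact: dist_cont|exact: cst_continuous].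
- by apply: continuousB; [exact: dist_cont|exact: cst_continuous].
Qed.

Lemma vcell_trivIset : trivIset setT vcell.
Proof.
move=> i j _ _ [z [[_ ci] [_ cj]]]; have [//|ij] := eqVneq i j.
have ji : j != i by rewrite eq_sym.
exfalso; have := ci j ji; have := cj i ij; lra.
Qed.

Lemma measurable_vboundary : measurable vboundary.
Proof.
apply: measurableD; first exact: measurable_C.
by apply: bigsetU_measurable => i _; exact: measurable_vcell.
Qed.

(* The cells already carry the whole mass of C. *)
Lemma mu_vboundary : mu vboundary = 0%E.
Proof.
set U := \big[setU/set0]_(i < n) vcell i.
have mU : measurable U by apply: bigsetU_measurable => i _; exact: measurable_vcell.
have muU : mu U = (\sum_(i < n) lam i)%:E.
  rewrite (measure_bigsetU_ord mu xpredT measurable_vcell vcell_trivIset).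
  by rewrite -sumEFin; apply: eq_bigr => i _; exact: mu_vcell.
have UC : U `<=` C by move=> z /bigsetU_ordP [i []].
have UB0 : U `&` vboundary = set0.
  by apply/seteqP; split=> z // [Uz [_ /(_ Uz)]].
have : mu C = (mu U + mu vboundary)%E.
  by rewrite -(measureU mu mU measurable_vboundary UB0) setDUK.
rewrite mu_C muU => /(congr1 (fun t => t - (\sum_(i < n) lam i)%:E)%E).
by rewrite subee // addeAC subee // add0e.
Qed.

(* z |-> h_{f(z)}(z), written with the indicators of the fibers of f so that
   it inherits their measurability. *)
Definition sitewise (f : Rd R d -> Rd R d) (h : 'I_n -> Rd R d -> R) (z : Rd R d) : R :=
  \sum_(k < n) \1_(fiber f k) z * h k z.

Lemma sitewiseE f h z i : C z -> f z = p i -> sitewise f h z = h i z.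
Proof.
move=> Cz fi; rewrite /sitewise (bigD1 i) //= big1 ?addr0.
  by rewrite indicE mem_set ?mul1r.
move=> k ki; rewrite indicE memNset ?mul0r // => -[_ fk].
by move: ki; rewrite /preimage /= fi in fk; rewrite (p_inj fk) eqxx.
Qed.

Lemma measurable_sitewise f h : feasible f ->
  (forall k, measurable_fun (C : set T) (h k : T -> R)) ->
  measurable_fun (C : set T) (sitewise f h : T -> R).
Proof.
move=> [_ ff] mh; apply: measurable_sum => k; apply: measurable_funM => //.
exact: measurable_indic (ff k).1.
Qed.

Lemma measurable_dist_site f : feasible f ->
  measurable_fun (C : set T) (fun z : T => dist (f z) z).
Proof.
move=> ff; apply: (eq_measurable_fun (sitewise f (fun k => dist (p k)) : T -> R)).
  by move=> z /[!inE] Cz; have [i fi] := ff.1 z Cz; rewrite (sitewiseE _ Cz fi) fi.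
by apply: measurable_sitewise => // k; exact: (continuous_measurable_Rd mu_null).
Qed.

(* Shifting the weights by [wbound] makes them nonnegative, so that only
   integrals of nonnegative functions occur. *)
Let wbound := \sum_(k < n) `|w k|.

Definition potential f := sitewise f (fun k _ => wbound - w k).

Lemma potentialE f z i : C z -> f z = p i -> potential f z = wbound - w i.
Proof. exact: sitewiseE. Qed.

Lemma potential_ge0 f z : feasible f -> C z -> 0 <= potential f z.
Proof.
move=> ff Cz; have [i fi] := ff.1 z Cz; rewrite (potentialE Cz fi) subr_ge0.
exact: le_trans (ler_norm _) (norm_le_sum_norm _ _).
Qed.

Let mass := \sum_(k < n) lam k * (wbound - w k).

Lemma integral_potential f : feasible f ->
  (\int[mu]_(z in (C : set T)) (potential f z)%:E = mass%:E)%E.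
Proof.
move=> ff; rewrite integral_sum_indic_scale //; first last.
- by move=> k; rewrite subr_ge0 (le_trans (ler_norm _)) ?norm_le_sum_norm.
- by move=> k z [].
- by move=> k; exact: (ff.2 k).1.
- exact: measurable_C.
by rewrite /mass -sumEFin; apply: eq_bigr => k _; rewrite (ff.2 k).2.
Qed.

Definition shifted_cost f z := dist (f z) z + potential f z.

Lemma shifted_cost_ge0 f z : feasible f -> C z -> 0 <= shifted_cost f z.
Proof.
move=> ff Cz; have [i fi] := ff.1 z Cz.
by rewrite addr_ge0 ?potential_ge0 // fi.
Qed.

Lemma measurable_shifted_cost f : feasible f ->
  measurable_fun (C : set T) (shifted_cost f : T -> R).
Proof.
move=> ff; apply: measurable_funD; first exact: measurable_dist_site.
by apply: measurable_sitewise => // k; exact: measurable_cst.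
Qed.

Lemma integral_shifted_cost f : feasible f ->
  (\int[mu]_(z in (C : set T)) (shifted_cost f z)%:E = cost f + mass%:E)%E.
Proof.
move=> ff; under eq_integral => z _ do rewrite EFinD.
rewrite ge0_integralD ?integral_potential //.
- exact: measurable_C.
- by move=> z Cz; rewrite lee_fin; have [i ->] := ff.1 z Cz.
- by apply/measurable_EFinP; exact: measurable_dist_site.
- by move=> z Cz; rewrite lee_fin; exact: potential_ge0.
- by apply/measurable_EFinP; apply: measurable_sitewise => // k; exact: measurable_cst.
Qed.

Section Minimiser.
Variable fw : Rd R d -> Rd R d.
Hypothesis fw_vcell : forall i z, C z ->
  (forall j, j != i -> dist (p i) z - w i < dist (p j) z - w j) -> fw z = p i.
Hypothesis fw_tie : forall z, C z ->
  ~ (exists i, forall j, j != i -> dist (p i) z - w i < dist (p j) z - w j) ->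
  exists i, fw z = p i /\ forall j, dist (p i) z - w i <= dist (p j) z - w j.

Lemma fw_argmin z : C z -> exists i,
  fw z = p i /\ forall j, dist (p i) z - w i <= dist (p j) z - w j.
Proof.
move=> Cz; have [[i ci]|] := pselect (exists i, forall j, j != i ->
  dist (p i) z - w i < dist (p j) z - w j); last exact: fw_tie.
exists i; split; first exact: fw_vcell.
by move=> j; have [->//|ji] := eqVneq j i; exact/ltW/ci.
Qed.

Lemma vcell_fw z i : C z -> fw z = p i -> ~ vboundary z -> vcell i z.
Proof.
move=> Cz fi zB; have /bigsetU_ordP [j cj] : (\big[setU/set0]_(k < n) vcell k) z.
  by apply: contrapT => zU; apply: zB.
by have <- : j = i by apply: p_inj; rewrite -fi; case: cj => _ /fw_vcell ->.
Qed.

Lemma feasible_fw : feasible fw.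
Proof.
split=> [z Cz|i]; first by have [i [fi _]] := fw_argmin Cz; exists i.
have fiberE : fiber fw i = vcell i `|` (fiber fw i `&` vboundary).
  apply/seteqP; split=> z.
    move=> [Cz fi]; have [zB|zB] := pselect (vboundary z); first by right.
    by left; exact: vcell_fw.
  by move=> [[Cz ci]|[]//]; split=> //; exact: fw_vcell.
have [mB muB] := mu_null_subset mu_null measurable_vboundary mu_vboundary
  (@subIsetr _ (fiber fw i) vboundary).
rewrite fiberE; split; first by apply: measurableU => //; exact: measurable_vcell.
by rewrite (measureU0 (measurable_vcell i) mB muB).
Qed.

Lemma shifted_cost_fw_le f z : feasible f -> C z ->
  shifted_cost fw z <= shifted_cost f z.
Proof.
move=> ff Cz; have [i fi] := ff.1 z Cz; have [j [fj jmin]] := fw_argmin Cz.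
rewrite /shifted_cost (potentialE Cz fi) (potentialE Cz fj) fi fj.
by have := jmin i; lra.
Qed.

Lemma shifted_cost_fw_lt f z : feasible f -> C z -> ~ vboundary z ->
  f z <> fw z -> shifted_cost fw z < shifted_cost f z.
Proof.
move=> ff Cz zB ffw; have [i fi] := ff.1 z Cz; have [j [fj _]] := fw_argmin Cz.
have [_ cj] := vcell_fw Cz fj zB.
have ij : i != j by apply: contra_notN ffw => /eqP ij; rewrite fi fj ij.
rewrite /shifted_cost (potentialE Cz fi) (potentialE Cz fj) fi fj.
by have := cj i ij; lra.
Qed.

Lemma cost_fw_le f : feasible f -> (cost fw <= cost f)%E.
Proof.
move=> ff; have ffw := feasible_fw.
rewrite -(leeD2rE (x := mass%:E)) // -!integral_shifted_cost //.
apply: ge0_le_integral; first exact: measurable_C.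
- by move=> z Cz; rewrite lee_fin; exact: shifted_cost_ge0.
- by apply/measurable_EFinP; exact: measurable_shifted_cost.
- by apply/measurable_EFinP; exact: measurable_shifted_cost.
- by move=> z Cz; rewrite lee_fin; exact: shifted_cost_fw_le.
Qed.

(* The continuous distances are bounded on the bounded set C. *)
Lemma integral_shifted_cost_fw_fin :
  (\int[mu]_(z in (C : set T)) (shifted_cost fw z)%:E)%E \is a fin_num.
Proof.
have ffw := feasible_fw.
have /choice [K CK] : forall i, exists K, forall z, C z -> dist (p i) z <= K.
  by move=> i; exact: continuous_bounded_Rd.
set B := \sum_(k < n) `|K k| + (wbound + wbound).
rewrite ge0_fin_numE; last first.
  by apply: integral_ge0 => z Cz; rewrite lee_fin; exact: shifted_cost_ge0.
apply: (@le_lt_trans _ _ (\int[mu]_(z in (C : set T)) (cst B%:E) z)%E).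
  apply: ge0_le_integral; first exact: measurable_C.
  - by move=> z Cz; rewrite lee_fin; exact: shifted_cost_ge0.
  - by apply/measurable_EFinP; exact: measurable_shifted_cost.
  - exact: measurable_cst.
  - move=> z Cz; rewrite lee_fin.
    have [j [fj _]] := fw_argmin Cz.
    rewrite /shifted_cost (potentialE Cz fj) fj /B.
    have := le_trans (CK j z Cz) (le_trans (ler_norm _) (norm_le_sum_norm K j)).
    have := norm_le_sum_norm w j; have := ler_norm (- w j); rewrite normrN.
    rewrite -/wbound; lra.
by rewrite integral_cst ?mu_C -?EFinM ?ltry //; exact: measurable_C.
Qed.

Lemma cost_fw_ae_unique f : feasible f -> cost f = cost fw ->
  exists N : set T, measurable N /\ mu N = 0%E /\
    forall z, C z -> f z <> fw z -> N z.
Proof.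
move=> ff costE; have ffw := feasible_fw.
have [||||N [mN N0 ltN]] := le_integral_eq_ae (mu := mu) measurable_C
    (measurable_shifted_cost ffw) (measurable_shifted_cost ff).
- by move=> z; exact: shifted_cost_ge0.
- by move=> z; exact: shifted_cost_fw_le.
- exact: integral_shifted_cost_fw_fin.
- by rewrite !integral_shifted_cost // costE.
exists (N `|` vboundary); split; first exact: measurableU mN measurable_vboundary.
split; first by rewrite (measureU0 mN measurable_vboundary mu_vboundary).
move=> z Cz fz; have [zB|zB] := pselect (vboundary z); first by right.
by left; apply: ltN => //; exact: shifted_cost_fw_lt.
Qed.

End Minimiser.
End WeightedVoronoi.

Theorem theorem2 (R : realType) (d n : nat)
  (mu : {measure set (LebRd R d) -> \bar R})
  (p : 'I_n -> Rd R d) (dist : Rd R d -> Rd R d -> R)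
  (C : set (Rd R d)) (lam : 'I_n -> R) (w : 'I_n -> R)
  (fw : Rd R d -> Rd R d) :
  (forall A : set (LebRd R d), measurable A -> (mu A = 0%E <-> leb_null A)) ->
  injective p ->
  (forall i, continuous (dist (p i))) ->
  (forall i z, 0 <= dist (p i) z) ->
  (forall i j, i != j -> forall C' : set (Rd R d), open C' -> bounded_Rd C' ->
     exists m M : R, m < M /\
       continuous (fun g : R => mu (C' `&` Rgam (dist (p i)) (dist (p j)) g)) /\
       {in `[m, M] &, forall g1 g2 : R, g1 <= g2 ->
          (mu (C' `&` Rgam (dist (p i)) (dist (p j)) g1) <=
           mu (C' `&` Rgam (dist (p i)) (dist (p j)) g2))%E} /\
       (forall g, g <= m -> C' `&` Rgam (dist (p i)) (dist (p j)) g = set0) /\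
       (forall g, M <= g -> C' `<=` Rgam (dist (p i)) (dist (p j)) g)) ->
  open C -> bounded_Rd C ->
  (forall i, 0 < lam i) ->
  mu C = (\sum_(i < n) lam i)%:E ->
  (forall i, mu (C `&` [set z | forall j, j != i ->
                  dist (p i) z - w i < dist (p j) z - w j]) = (lam i)%:E) ->
  (forall i z, C z -> (forall j, j != i -> dist (p i) z - w i < dist (p j) z - w j) ->
     fw z = p i) ->
  (forall z, C z ->
     ~ (exists i, forall j, j != i -> dist (p i) z - w i < dist (p j) z - w j) ->
     exists i, fw z = p i /\ forall j, dist (p i) z - w i <= dist (p j) z - w j) ->
  let F_Lam (f : Rd R d -> Rd R d) : Prop :=
    (forall z, C z -> exists i, f z = p i) /\
    forall i, measurable (C `&` f @^-1` [set p i] : set (LebRd R d)) /\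
              mu (C `&` f @^-1` [set p i]) = (lam i)%:E in
  let cost (f : Rd R d -> Rd R d) : \bar R :=
    (\int[mu]_(z in (C : set (LebRd R d))) (dist (f z) z)%:E)%E in
  [/\ F_Lam fw,
      forall f, F_Lam f -> (cost fw <= cost f)%E &
      forall f, F_Lam f -> cost f = cost fw ->
        exists N : set (LebRd R d), measurable N /\ mu N = 0%E /\
          forall z, C z -> f z <> fw z -> N z].
Proof.
(* Admissibility and lambda_i > 0 only serve to produce the weights w, which
   are given here. *)
move=> mu_null p_inj dist_cont dist_ge0 _ C_open C_bounded _ mu_C mu_vcell
  fw_vcell fw_tie F_Lam cost.
split.
- exact: (feasible_fw mu_null p_inj dist_cont C_open mu_C mu_vcell fw_vcell fw_tie).
- exact: (cost_fw_le mu_null p_inj dist_cont dist_ge0 C_open mu_C mu_vcell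
    fw_vcell fw_tie).
- exact: (cost_fw_ae_unique mu_null p_inj dist_cont dist_ge0 C_open C_bounded mu_C
    mu_vcell fw_vcell fw_tie).
Qed.
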